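(* Let $G$ be a finite group. The minimal number of (pairwise inequivalent) irreducible components of a faithful complex representation of $G$ is at most the minimal length $\ell$ of a chain of subgroups $\{e\}=H_0<H_1<\dots<H_\ell=G$ such that every interval $[H_i,H_{i+1}]$ of the subgroup lattice is bottom Boolean.
   Context: For subgroups $H\subseteq K$, $[H,K]$ is the lattice of subgroups between $H$ and $K$. The bottom interval of a finite lattice $L$ is $[\hat 0,b]$ where $b$ is the join of all atoms (minimal elements of $L\setminus\{\hat 0\}$); $L$ is bottom Boolean if its bottom interval is a Boolean lattice (distributive, bounded, every element has a unique complement). *)

From HB Require Import structures.
From mathcomp Require Import all_boot all_order all_algebra all_fingroup all_solvable all_field all_character.
Set Implicit Arguments. Unset Strict Implicit. Unset Printing Implicit Defensive.

Section SubgroupLattice.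
Variable gT : finGroupType.
Local Open Scope group_scope.

Definition in_interval (H K L : {set gT}) : bool := (H \subset L) && (L \subset K).

Definition interval_atom (H K : {set gT}) (L : {group gT}) : bool :=
  [&& in_interval H K L, H \proper L &
   [forall M : {group gT}, ((H \proper M) && (M \subset L)) ==> (M == L :> {set gT})]].

(* the join b of all atoms of [H, K] (equal to H when there is no atom) *)
Definition interval_atom_join (H K : {set gT}) : {set gT} :=
  << H :|: \bigcup_(L : {group gT} | interval_atom H K L) (L : {set gT}) >>.

Definition boolean_interval (H b : {set gT}) : Prop :=
  (forall X Y Z : {group gT}, in_interval H b X -> in_interval H b Y ->
      in_interval H b Z -> X :&: (Y <*> Z) = (X :&: Y) <*> (X :&: Z)) /\
  (forall X : {group gT}, in_interval H b X ->
      exists Y : {group gT}, [/\ in_interval H b Y, X :&: Y = H, X <*> Y = b &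
        forall Y' : {group gT}, in_interval H b Y' -> X :&: Y' = H ->
           X <*> Y' = b -> Y' = Y]).

Definition bottom_boolean (H K : {set gT}) : Prop :=
  boolean_interval H (interval_atom_join H K).

End SubgroupLattice.

From HB Require Import structures.
From mathcomp Require Import all_boot all_order all_algebra all_fingroup all_solvable all_field all_character.
From mathcomp Require Import ring zify.
Set Implicit Arguments. Unset Strict Implicit. Unset Printing Implicit Defensive.
Import GroupScope Order.TTheory GRing.Theory Num.Theory.
Local Open Scope ring_scope.

(* The fixed-point dimension [fixdim chi X] of a character is antitone in X,
   and [chi] is faithful as soon as it strictly drops above [1], since it equals
   [chi 1] on the kernel. Descending the chain, step i adds one irreducible
   constituent of G lying over an irreducible character of H_(i+1) whose fixed
   dimension strictly drops above H_i inside H_(i+1); on subgroups not contained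
   in H_(i+1), the drop of the previous sum at H_(i+1) passes down to H_i by
   submodularity of fixed spaces.
   That irreducible character exists because [H_i, H_(i+1)] is bottom Boolean:
   no atom lies in the join J of the other atoms. By induction on the number of
   atoms, one lifts a character of J to H_(i+1) through induction, which strictly
   lowers the fixed dimension from H_i to the new atom K because K :&: J = H_i. *)

Lemma mxtrace_idem (F : fieldType) n (P : 'M[F]_n) :
  P *m P = P -> \tr P = (\rank P)%:R.
Proof.
move=> PP; have /row_fullP [C CC] := col_base_full P.
have /row_freeP [B BB] := row_base_free P.
have defP := mulmx_base P; set cb := col_base P in CC defP.
set rb := row_base P in BB defP; clearbody cb rb.
have base_inv : rb *m cb = 1%:M.
  have e : C *m (cb *m rb *m (cb *m rb)) *m B = C *m (cb *m rb) *m B.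
    by rewrite defP PP.
  by rewrite !mulmxA CC mul1mx -!mulmxA BB !mulmx1 in e.
by rewrite -{1}defP mxtrace_mulC base_inv mxtrace1.
Qed.

Definition fixdim (gT : finGroupType) (G : {group gT}) (phi : 'CF(G))
    (X : {group gT}) :=
  '['Res[X] phi, 1]_X.

Section FixedSpace.
Variables (gT : finGroupType) (G X : {group gT}) (n : nat).
Variable rG : mx_representation algC G n.
Hypothesis sXG : X \subset G.

Let avg : 'M[algC]_n := #|X|%:R^-1 *: \sum_(x in X) rG x.

Let avg_const (M : 'M[algC]_n) : #|X|%:R^-1 *: \sum_(x in X) M = M.
Proof.
by rewrite sumr_const -scaler_nat scalerA mulVf ?scale1r ?pnatr_eq0 -?lt0n.
Qed.

Let avg_mulmxl y : y \in X -> rG y *m avg = avg.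
Proof.
move=> Xy; rewrite /avg -scalemxAr mulmx_sumr; congr (_ *: _).
rewrite (reindex_inj (mulgI (y^-1)%g)) /=; apply: eq_big => [x|x Xx].
  by rewrite groupMl ?groupV.
have Gy := subsetP sXG y Xy.
by rewrite -repr_mxM ?mulKVg // (subsetP sXG) // groupMl ?groupV.
Qed.

Let avg_mulmxr y : y \in X -> avg *m rG y = avg.
Proof.
move=> Xy; rewrite /avg -scalemxAl mulmx_suml; congr (_ *: _).
rewrite (reindex_inj (mulIg (y^-1)%g)) /=; apply: eq_big => [x|x Xx].
  by rewrite groupMr ?groupV.
have Gy := subsetP sXG y Xy.
by rewrite -repr_mxM ?mulgKV // (subsetP sXG) // groupMr ?groupV.
Qed.

Let avg_idem : avg *m avg = avg.
Proof.
by rewrite {1}/avg -scalemxAl mulmx_suml (eq_bigr (fun _ => avg)) ?avg_const.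
Qed.

Let avg_eqmx : (avg :=: rfix_mx rG X)%MS.
Proof.
apply/eqmxP/andP; split; first exact/rfix_mxP/avg_mulmxr.
have -> : rfix_mx rG X = rfix_mx rG X *m avg.
  rewrite /avg -scalemxAr mulmx_sumr (eq_bigr (fun _ => rfix_mx rG X)).
    by rewrite avg_const.
  by move=> x; apply: rfix_mx_id.
exact: submxMl.
Qed.

Lemma fixdim_cfRepr : fixdim (cfRepr rG) X = (\rank (rfix_mx rG X))%:R.
Proof.
rewrite /fixdim -avg_eqmx -mxtrace_idem // mxtraceZ cfdotE; congr (_ * _).
rewrite raddf_sum; apply: eq_bigr => x Xx.
by rewrite cfun1E Xx conjC1 mulr1 cfResE // cfunE (subsetP sXG).
Qed.

End FixedSpace.

Section FixedDimension.
Variable gT : finGroupType.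
Implicit Types G L X Y : {group gT}.

Lemma fixdim_ge0 G (chi : 'CF(G)) X :
  chi \is a character -> X \subset G -> 0 <= fixdim chi X.
Proof. by case/char_reprP=> [[n rG] ->] sXG; rewrite fixdim_cfRepr. Qed.

Lemma fixdimS G (chi : 'CF(G)) X Y :
  chi \is a character -> Y \subset X -> X \subset G ->
  fixdim chi X <= fixdim chi Y.
Proof.
case/char_reprP=> [[n rG] ->] sYX sXG.
rewrite !fixdim_cfRepr ?(subset_trans sYX) // ler_nat.
exact/mxrankS/rfix_mxS.
Qed.

Lemma fixdimD G (phi psi : 'CF(G)) X :
  fixdim (phi + psi) X = fixdim phi X + fixdim psi X.
Proof. by rewrite /fixdim raddfD cfdotDl. Qed.

Lemma fixdim_Res G L (phi : 'CF(G)) X :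
  X \subset L -> L \subset G -> fixdim ('Res[L] phi) X = fixdim phi X.
Proof. by move=> sXL sLG; rewrite /fixdim cfResRes. Qed.

Lemma fixdim_irr_expansion G (phi : 'CF(G)) X :
  fixdim phi X = \sum_i '[phi, 'chi_i] * fixdim 'chi_i X.
Proof.
rewrite {1}(cfun_sum_cfdot phi) /fixdim linear_sum cfdot_suml.
by apply: eq_bigr => i _; rewrite linearZ cfdotZl.
Qed.

Lemma sum_cfun_fixdim G (phi : 'CF(G)) X :
  X \subset G -> \sum_(x in X) phi x = #|X|%:R * fixdim phi X.
Proof.
move=> sXG; rewrite /fixdim cfdotE mulrA divff ?mul1r ?neq0CG //.
by apply: eq_bigr => x Xx; rewrite cfun1E Xx conjC1 mulr1 cfResE.
Qed.

Lemma fixdim_Res_constt_lt G L (chi : 'CF(G)) (j : Iirr L) X Y :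
  chi \is a character -> L \subset G -> j \in irr_constt ('Res[L] chi) ->
  Y \subset X -> X \subset L -> fixdim 'chi_j X < fixdim 'chi_j Y ->
  fixdim chi X < fixdim chi Y.
Proof.
move=> Nchi sLG Lj sYX sXL lt_j; have sYL := subset_trans sYX sXL.
have NchiL := cfRes_char L Nchi.
rewrite -(fixdim_Res _ sXL sLG) -(fixdim_Res _ sYL sLG).
rewrite !(fixdim_irr_expansion ('Res[L] chi)) (bigD1 j) // [ltRHS](bigD1 j) //=.
apply: ltr_leD.
  by rewrite ltr_pM2l // lt0r -irr_consttE Lj natr_ge0 ?Cnat_cfdot_char_irr.
apply: ler_sum => i _; rewrite ler_wpM2l ?natr_ge0 ?Cnat_cfdot_char_irr //.
exact: fixdimS (irr_char i) sYX sXL.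
Qed.

End FixedDimension.

Section ConjugateIntersections.
Variable gT : finGroupType.
Implicit Types H C K : {group gT}.
Local Open Scope group_scope.

Lemma card_conjI (A B : {set gT}) x : #|A :^ x :&: B| = #|A :&: B :^ x^-1|.
Proof. by rewrite -[LHS](cardJg _ x^-1) conjIg conjsgK. Qed.

Lemma sum_card_conjI_split H C K : H \subset K -> C \subset K ->
  \sum_(k in K) #|H :^ k :&: C| =
  (#|H| * #|C| + \sum_(k in K | k \notin (H * C)%g) #|H :^ k :&: C|)%N.
Proof.
move=> sHK sCK; rewrite (bigID (mem (H * C))) /=; congr (_ + _)%N.
have sHCK : H * C \subset K by rewrite mul_subG.
rewrite (eq_bigl (mem (H * C))) => [|k]; last first.
  by apply/andb_idl => /(subsetP sHCK).
rewrite (eq_bigr (fun _ => #|H :&: C|)) => [|k /mulsgP [h c Hh Cc ->]].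
  by rewrite sum_nat_const mul_cardG.
by rewrite conjsgM (conjGid Hh) card_conjI (conjGid (groupVr Cc)).
Qed.

Lemma sum_card_conjI_ge H C K : H \subset K -> C \subset K ->
  (#|H| * #|C| <= \sum_(k in K) #|H :^ k :&: C|)%N.
Proof. by move=> sHK sCK; rewrite sum_card_conjI_split ?leq_addr. Qed.

Lemma sum_card_conjI_gt H K : H \proper K ->
  (#|H| * #|H| < \sum_(k in K) #|H :^ k :&: H|)%N.
Proof.
case/properP=> sHK [k Kk nHk]; rewrite sum_card_conjI_split // -addn1 leq_add2l.
rewrite (bigD1 k) /=; last by rewrite Kk mulGid.
by rewrite (leq_trans _ (leq_addr _ _)) // card_gt0; apply/set0Pn; exists 1.
Qed.

End ConjugateIntersections.

Section InducedFixedDimension.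
Variables (gT : finGroupType) (L M H K : {group gT}) (j : Iirr M).
Hypotheses (sML : M \subset L) (pHK : H \proper K) (sKL : K \subset L).
Hypotheses (KM : K :&: M = H) (fixdim_gt0 : 0 < fixdim 'chi_j H).

(* Mackey-style count: |M| |X| fixdim (Ind psi) X = T X, a sum over x in L of
   |X^x :&: M| fixdim psi (X^x :&: M). Grouping the terms of T H along the cosets
   K x, each group dominates |H|/|K| times the x-term of T K, strictly for x = 1
   because K :&: M = H. *)

Let psi := 'chi_j.
Let sHK := proper_sub pHK.

Let sum_conj (A : {group gT}) x :
  \sum_(g in A) psi (g ^ x)%g = #|A :^ x :&: M|%:R * fixdim psi (A :^ x :&: M)%G.
Proof.
rewrite -sum_cfun_fixdim ?subsetIr // [RHS](reindex_inj (@conjg_inj _ x)) /=.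
rewrite (bigID (fun g => (g ^ x)%g \in M)) /= [X in _ + X]big1 ?addr0.
  by apply: eq_bigl => g; rewrite inE memJ_conjg.
by move=> g /andP[_ nMgx]; rewrite cfun0.
Qed.

Let T (X : {set gT}) := \sum_(x in L) \sum_(g in X) psi (g ^ x)%g.

Let T_Ind (X : {group gT}) : X \subset L ->
  #|M|%:R * (#|X|%:R * fixdim ('Ind[L] psi) X) = T X.
Proof.
move=> sXL; rewrite -sum_cfun_fixdim // mulr_sumr /T exchange_big /=.
by apply: eq_bigr => g Xg; rewrite cfIndE // mulrA divff ?mul1r ?neq0CG.
Qed.

Let Hkx x k := (H :^ (k * x)%g :&: M)%G.
Let Kx x := (K :^ x :&: M)%G.

Let card_Hkx x k : k \in K -> #|Hkx x k| = #|H :^ k :&: (K :&: M :^ (x^-1)%g)|.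
Proof.
move=> Kk; rewrite /= conjsgM card_conjI setIA; congr #|_ :&: _|.
by apply/esym/setIidPl; rewrite -(conjGid Kk) conjSg.
Qed.

Let T_H : #|K|%:R * T H =
  \sum_(x in L) \sum_(k in K) #|Hkx x k|%:R * fixdim psi (Hkx x k).
Proof.
rewrite mulr_natl -sumr_const [RHS]exchange_big /=; apply: eq_bigr => k Kk.
rewrite /T (reindex_inj (mulgI k)) /=.
apply: eq_big => [x|x Lx]; first by rewrite groupMl // (subsetP sKL).
exact: sum_conj.
Qed.

Let T_K : #|H|%:R * T K =
  \sum_(x in L) #|H|%:R * (#|Kx x|%:R * fixdim psi (Kx x)).
Proof. by rewrite /T mulr_sumr; apply: eq_bigr => x Lx; rewrite sum_conj. Qed.

Let sum_Hkx_ge x :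
  (\sum_(k in K) #|Hkx x k|)%:R * fixdim psi (Kx x) <=
  \sum_(k in K) #|Hkx x k|%:R * fixdim psi (Hkx x k).
Proof.
rewrite natr_sum mulr_suml; apply: ler_sum => k Kk.
rewrite ler_wpM2l ?ler0n // fixdimS ?irr_char ?subsetIr //=.
by rewrite conjsgM setSI // conjSg -(conjGid Kk) conjSg.
Qed.

Let Kx_le x :
  #|H|%:R * (#|Kx x|%:R * fixdim psi (Kx x)) <=
  \sum_(k in K) #|Hkx x k|%:R * fixdim psi (Hkx x k).
Proof.
apply: le_trans (sum_Hkx_ge x); rewrite mulrA -natrM.
rewrite ler_wpM2r ?fixdim_ge0 ?irr_char ?subsetIr // ler_nat.
rewrite (eq_bigr _ (fun k Kk => card_Hkx x Kk)) /= card_conjI.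
by rewrite sum_card_conjI_ge ?subsetIl.
Qed.

Let Kx1_lt :
  #|H|%:R * (#|Kx 1%g|%:R * fixdim psi (Kx 1%g)) <
  \sum_(k in K) #|Hkx 1%g k|%:R * fixdim psi (Hkx 1%g k).
Proof.
have Kx1 : Kx 1%g = H by apply: val_inj; rewrite /= conjsg1 KM.
apply: lt_le_trans (sum_Hkx_ge 1%g); rewrite Kx1 mulrA -natrM ltr_pM2r // ltr_nat.
rewrite (eq_bigr _ (fun k Kk => card_Hkx 1%g Kk)) invg1 conjsg1 KM.
exact: sum_card_conjI_gt.
Qed.

Lemma fixdim_Ind_lt : fixdim ('Ind[L] psi) K < fixdim ('Ind[L] psi) H.
Proof.
have T_lt : #|H|%:R * T K < #|K|%:R * T H.
  rewrite T_K T_H (bigD1 1%g) // [ltRHS](bigD1 1%g) //.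
  by apply: ltr_leD; [exact: Kx1_lt | apply: ler_sum => x _; exact: Kx_le].
pose c : algC := #|H|%:R * #|M|%:R * #|K|%:R.
have c_gt0 : 0 < c by rewrite !mulr_gt0 ?ltr0n ?cardG_gt0.
have TK_c : #|H|%:R * T K = c * fixdim ('Ind[L] psi) K.
  by rewrite -T_Ind // /c; ring.
have TH_c : #|K|%:R * T H = c * fixdim ('Ind[L] psi) H.
  by rewrite -T_Ind ?(subset_trans sHK sKL) // /c; ring.
by rewrite -(ltr_pM2l c_gt0) -TK_c -TH_c.
Qed.

End InducedFixedDimension.

Lemma exists_irr_constt_fixdim_lt (gT : finGroupType) (L M H K : {group gT})
    (j : Iirr M) :
  M \subset L -> H \proper K -> K \subset L -> K :&: M = H ->
  0 < fixdim 'chi_j H ->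
  exists2 i : Iirr L, j \in irr_constt ('Res[M] 'chi_i) &
                      fixdim 'chi_i K < fixdim 'chi_i H.
Proof.
move=> sML pHK sKL KM fixdim_gt0.
have sHL := subset_trans (proper_sub pHK) sKL.
have [|/existsPn no_i] := boolP [exists i : Iirr L,
  (j \in irr_constt ('Res[M] 'chi_i)) && (fixdim 'chi_i K < fixdim 'chi_i H)].
  by case/existsP=> i /andP[]; exists i.
have := fixdim_Ind_lt sML pHK sKL KM fixdim_gt0.
rewrite real_ltNge ?ger0_real ?fixdim_ge0 ?cfInd_char ?irr_char // => /negP[].
rewrite !(fixdim_irr_expansion ('Ind[L] 'chi_j)); apply: ler_sum => i _.
have := no_i i; rewrite -constt_Ind_Res irr_consttE negb_and negbK.
case/orP=> [/eqP-> | K_ge]; first by rewrite !mul0r.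
rewrite ler_wpM2l ?natr_ge0 ?Cnat_cfdot_char_irr ?cfInd_char ?irr_char //.
by rewrite real_leNgt ?ger0_real ?fixdim_ge0 ?irr_char.
Qed.

Section IndependentAtoms.
Variable gT : finGroupType.
Implicit Types H K L X : {group gT}.
Implicit Type A : {set {group gT}}.

Definition fixdim_drops L (phi : 'CF(L)) H :=
  forall X, H \proper X -> X \subset L -> fixdim phi X < fixdim phi H.

Definition join_others H A K :=
  <<(H : {set gT}) :|: \bigcup_(K' in A :\ K) (K' : {set gT})>>%G.

Definition independent_atoms H L A :=
  forall K, K \in A -> [/\ H \proper K, K \subset L,
    forall X, H \proper X -> X \subset K -> (X : {set gT}) = K &
    ~~ (K \subset join_others H A K)].

Definition atoms_cover H L A :=
  forall X, H \proper X -> X \subset L -> exists2 K, K \in A & K \subset X.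

Lemma fixdim_drops_top H L :
  (H : {set gT}) = L -> 0 < fixdim 'chi[L]_0 H /\ fixdim_drops 'chi[L]_0 H.
Proof.
move=> eHL; split=> [|X]; last by rewrite properE eHL => /andP[_ /negP].
by rewrite /fixdim irr0 cfRes_cfun1 ?eHL // cfnorm1 ltr01.
Qed.

Lemma sub_join_others H A K : H \subset join_others H A K.
Proof. by rewrite sub_gen ?subsetUl. Qed.

Lemma mem_join_others H A K K' : K' \in A :\ K -> K' \subset join_others H A K.
Proof.
move=> AK'; rewrite sub_gen //.
exact: subset_trans (bigcup_sup K' AK') (subsetUr _ _).
Qed.

Lemma join_others_sub H L A K :
  H \subset L -> independent_atoms H L A -> join_others H A K \subset L.
Proof.
move=> sHL indA; rewrite gen_subG subUset sHL.
by apply/bigcupsP=> K' /setD1P[_ /indA[]].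
Qed.

Lemma independent_atomsI H L A K :
  independent_atoms H L A -> K \in A -> K :&: join_others H A K = H.
Proof.
move=> indA AK; have [pHK _ minK nsKJ] := indA K AK.
have sHI : H \subset K :&: join_others H A K.
  by rewrite subsetI proper_sub // sub_join_others.
have [//|pHI] := eqVproper sHI; case/negP: nsKJ.
by rewrite -(minK _ pHI (subsetIl _ _)) subsetIr.
Qed.

Lemma independent_atomsD1 H L A K :
  independent_atoms H L A -> K \in A ->
  independent_atoms H (join_others H A K) (A :\ K).
Proof.
move=> indA AK K' AK'; have /setD1P[_ AK'0] := AK'.
have [pHK' _ minK' nsK'J] := indA K' AK'0.
split=> //; first exact: mem_join_others.
apply: contra nsK'J => /subset_trans; apply; rewrite genS // setUS //.
apply/bigcupsP=> Y /setD1P[nYK' /setD1P[_ AY]].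
by rewrite (bigcup_sup Y) // !inE nYK'.
Qed.

Lemma atoms_coverD1 H L A K :
  H \subset L -> independent_atoms H L A -> atoms_cover H L A -> K \in A ->
  atoms_cover H (join_others H A K) (A :\ K).
Proof.
move=> sHL indA covA AK X pHX sXJ.
have [_ _ _ nsKJ] := indA K AK.
have [K' AK' sK'X] := covA X pHX (subset_trans sXJ (join_others_sub K sHL indA)).
exists K' => //; rewrite !inE AK' andbT.
by apply: contraNneq nsKJ => eK; rewrite -{1}eK (subset_trans sK'X sXJ).
Qed.

Lemma exists_irr_fixdim_drops n H L A :
  (#|A| <= n)%N -> H \subset L -> independent_atoms H L A -> atoms_cover H L A ->
  exists i : Iirr L, 0 < fixdim 'chi_i H /\ fixdim_drops 'chi_i H.
Proof.
elim: n H L A => [|n IHn] H L A leAn sHL indA covA.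
all: have [eHL | pHL] := eqVproper sHL;
  first by exists 0; apply: fixdim_drops_top.
all: have [K AK sKL] := covA L pHL (subxx L).
  by move: leAn; rewrite leqn0 => /eqP/card0_eq/(_ K); rewrite AK.
have [pHK _ _ _] := indA K AK.
set J := join_others H A K.
have sJL : J \subset L := join_others_sub K sHL indA.
have [j [fixdim_gt0 drops_j]] :
    exists j : Iirr J, 0 < fixdim 'chi_j H /\ fixdim_drops 'chi_j H.
  apply: (IHn _ _ (A :\ K)).
  - by move: leAn; rewrite (cardsD1 K A) AK.
  - exact: sub_join_others.
  - exact: (independent_atomsD1 indA AK).
  - exact: (atoms_coverD1 sHL indA covA AK).
have [i Ji ltK] := exists_irr_constt_fixdim_lt sJL pHK sKL
  (independent_atomsI indA AK) fixdim_gt0.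
exists i; split; first exact: le_lt_trans (fixdim_ge0 (irr_char i) sKL) ltK.
move=> X pHX sXL; have [K' AK' sK'X] := covA X pHX sXL.
apply: le_lt_trans (fixdimS (irr_char i) sK'X sXL) _.
have [-> // | nK'K] := eqVneq K' K.
have AK'K : K' \in A :\ K by rewrite !inE nK'K.
have [pHK' _ _ _] := indA K' AK'.
have sK'J := mem_join_others H AK'K.
exact: fixdim_Res_constt_lt (irr_char i) sJL Ji (proper_sub pHK') sK'J
  (drops_j _ pHK' sK'J).
Qed.

End IndependentAtoms.

Section BottomBoolean.
Variable gT : finGroupType.
Implicit Types H K M X : {group gT}.

Lemma interval_atom_min H M K X :
  interval_atom H M K -> H \proper X -> X \subset K -> (X : {set gT}) = K.
Proof.
case/and3P=> _ _ /forallP minK pHX sXK.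
by apply/eqP/(implyP (minK X)); rewrite pHX.
Qed.

Lemma interval_atomI H M K K' :
  interval_atom H M K -> interval_atom H M K' -> K != K' -> K :&: K' = H.
Proof.
move=> aK aK' nKK'; have [_ pHK _] := and3P aK; have [_ pHK' _] := and3P aK'.
have sHI : H \subset K :&: K' by rewrite subsetI !proper_sub.
have [// | pHI] := eqVproper sHI; case/eqP: nKK'; apply: val_inj.
apply: (interval_atom_min aK' pHK).
by rewrite -(interval_atom_min aK pHI (subsetIl _ _)) subsetIr.
Qed.

Lemma interval_atoms_cover H M :
  atoms_cover H M [set K : {group gT} | interval_atom H M K].
Proof.
move=> X pHX sXM.
have [|Y /andP[pHY sYX] minY] := @arg_minnP _ X
  (fun Y : {group gT} => (H \proper Y) && (Y \subset X)) (fun Y => #|Y|).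
  by rewrite pHX subxx.
exists Y => //; rewrite inE /interval_atom /in_interval proper_sub //= pHY.
rewrite (subset_trans sYX sXM); apply/forallP=> Z; apply/implyP=> /andP[pHZ sZY].
by rewrite eqEcard sZY minY // pHZ (subset_trans sZY sYX).
Qed.

Lemma sub_interval_atom_join H M K :
  interval_atom H M K -> in_interval H (interval_atom_join H M) K.
Proof.
move=> aK; case/and3P: (aK) => /andP[sHK _] _ _.
rewrite /in_interval sHK sub_gen //.
exact: subset_trans (bigcup_sup K aK) (subsetUr _ _).
Qed.

(* In the Boolean interval [H, b], the complement of an atom K contains every
   other atom, hence their join, but not K. *)
Lemma bottom_boolean_independent_atoms H M :
  bottom_boolean H M ->
  independent_atoms H M [set K : {group gT} | interval_atom H M K].
Proof.
move=> [distr compl] K; rewrite inE => aK.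
have [/andP[_ sKM] pHK _] := and3P aK.
split=> //; first by move=> X; apply: interval_atom_min aK.
have [Y [iY KY KYb _]] := compl K (sub_interval_atom_join aK).
have sHY : H \subset Y by case/andP: iY.
have sJY : join_others H [set K | interval_atom H M K] K \subset Y.
  rewrite gen_subG subUset sHY; apply/bigcupsP=> K'.
  rewrite !inE => /andP[nK'K aK'].
  have iK' := sub_interval_atom_join aK'.
  have := distr K' K Y iK' (sub_interval_atom_join aK) iY.
  rewrite KYb (setIidPl _); last by case/andP: iK'.
  rewrite (interval_atomI aK' aK nK'K) => ->.
  by rewrite joingE gen_subG subUset sHY subsetIr.
apply/negP=> /subset_trans/(_ sJY) sKY.
by move: pHK; rewrite -KY (setIidPl sKY) properxx.
Qed.

Lemma bottom_boolean_exists_irr H M :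
  H \subset M -> bottom_boolean H M ->
  exists i : Iirr M, 0 < fixdim 'chi_i H /\ fixdim_drops 'chi_i H.
Proof.
move=> sHM bbHM; apply: (exists_irr_fixdim_drops (leqnn _) sHM).
  exact: bottom_boolean_independent_atoms.
exact: interval_atoms_cover.
Qed.

End BottomBoolean.

Section CharacterChain.
Variable gT : finGroupType.
Implicit Types G H M X : {group gT}.

(* Fix X + Fix M <= Fix (X :&: M) and Fix X :&: Fix M = Fix (X <*> M). *)
Lemma fixdim_submod G (chi : 'CF(G)) X M :
  chi \is a character -> X \subset G -> M \subset G ->
  fixdim chi X + fixdim chi M <= fixdim chi (X :&: M)%G + fixdim chi (X <*> M)%G.
Proof.
case/char_reprP=> [[n rG] ->] sXG sMG.
have sJG : X <*> M \subset G by rewrite join_subG sXG.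
rewrite !fixdim_cfRepr ?subIset ?sXG // -!natrD ler_nat -mxrank_sum_cap.
apply: leq_add; apply: mxrankS.
  by rewrite addsmx_sub !rfix_mxS ?subsetIl ?subsetIr.
by rewrite -rfix_mx_rstabC // join_subG !rfix_mx_rstabC // capmxSl capmxSr.
Qed.

Lemma fixdim_drops_add_irr G M H (chi : 'CF(G)) (th : Iirr G) (j : Iirr M) :
  chi \is a character -> H \subset M -> M \subset G -> fixdim_drops chi M ->
  j \in irr_constt ('Res[M] 'chi_th) -> fixdim_drops 'chi_j H ->
  fixdim_drops (chi + 'chi_th) H.
Proof.
move=> Nchi sHM sMG dropsM Mj drops_j X pHX sXG; have sHX := proper_sub pHX.
rewrite !fixdimD; have [sXM | nsXM] := boolP (X \subset M).
  rewrite ler_ltD ?fixdimS //.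
  exact: fixdim_Res_constt_lt (irr_char th) sMG Mj sHX sXM (drops_j X pHX sXM).
rewrite ltr_leD ?fixdimS ?irr_char //.
have pMJ : M \proper X <*> M.
  rewrite properE joing_subr; apply: contra nsXM.
  exact: subset_trans (joing_subl X M).
have sJG : X <*> M \subset G by rewrite join_subG sXG.
rewrite -(ltrD2r (fixdim chi M)) (le_lt_trans (fixdim_submod Nchi sXG sMG)) //.
by rewrite ler_ltD ?dropsM ?fixdimS ?subsetI ?sHX ?subIset ?sXG.
Qed.

Lemma fixdim_drops1_cfaithful G (chi : 'CF(G)) :
  fixdim_drops chi 1%G -> cfaithful chi.
Proof.
move=> drops1; apply/negPn/negP => nsK1.
have pK : 1%G \proper (cfker chi)%G by rewrite properE sub1G.
have fixdim_ker (N : {group gT}) : N \subset cfker chi -> fixdim chi N = chi 1%g.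
  move=> sNK; apply: (mulfI (neq0CG N)); rewrite -sum_cfun_fixdim.
    rewrite (eq_bigr (fun _ => chi 1%g)) ?sumr_const ?mulr_natl // => y Ny.
    exact/cfker1/(subsetP sNK).
  exact: subset_trans sNK (cfker_sub chi).
by have := drops1 _ pK (cfker_sub chi); rewrite !fixdim_ker ?sub1G ?ltxx.
Qed.

Lemma card_irr_constt_add_irr G (chi : 'CF(G)) (th : Iirr G) :
  (#|irr_constt (chi + 'chi_th)%R| <= #|irr_constt chi|.+1)%N.
Proof.
apply: (@leq_trans #|th |: [set i in irr_constt chi]|).
  apply/subset_leq_card/subsetP => i; rewrite !inE cfdotDl cfdot_irr.
  by have [-> | nith] := eqVneq i th; rewrite ?addr0.
by rewrite cardsU1 cardsE; case: (_ \notin _).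
Qed.

End CharacterChain.

Section BottomBooleanChain.
Variables (gT : finGroupType) (G : {group gT}) (l : nat) (Hs : nat -> {group gT}).
Hypothesis Hs_top : (Hs l : {set gT}) = G.
Hypothesis Hs_step : forall i, (i < l)%N ->
  ((Hs i : {set gT}) \proper Hs i.+1)%g /\ bottom_boolean (Hs i) (Hs i.+1).

Lemma chain_sub i : (i <= l)%N -> Hs i \subset G.
Proof.
move=> le_il; rewrite -(subKn le_il); elim: (l - i)%N => [|k IHk].
  by rewrite subn0 Hs_top.
have [lt_kl | le_lk] := ltnP k l; last by have -> : (l - k.+1 = l - k)%N by lia.
apply: subset_trans IHk; rewrite -(subnSK lt_kl).
by apply: proper_sub; apply: (Hs_step _).1; lia.
Qed.

Lemma exists_char_fixdim_drops m : (m <= l)%N ->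
  exists chi : 'CF(G), [/\ chi \is a character, (#|irr_constt chi| <= m)%N &
                          fixdim_drops chi (Hs (l - m))].
Proof.
elim: m => [|m IHm] le_ml.
  exists 0; split; first exact: rpred0.
    by rewrite leqn0; apply/eqP/eq_card0 => i; rewrite !inE cfdot0l eqxx.
  by move=> X; rewrite subn0 Hs_top properE => /andP[_ /negP].
have [chi [Nchi card_chi drops_chi]] := IHm (ltnW le_ml).
have [pHM bbHM] : Hs (l - m.+1) \proper Hs (l - m) /\
                  bottom_boolean (Hs (l - m.+1)) (Hs (l - m)).
  by rewrite -(subnSK le_ml); apply: Hs_step; lia.
have sMG := chain_sub (leq_subr m l).
have [j [_ drops_j]] := bottom_boolean_exists_irr (proper_sub pHM) bbHM.
have [th] := constt_cfInd_irr j sMG; rewrite constt_Ind_Res => Mj.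
exists (chi + 'chi_th); split.
- by rewrite rpredD ?irr_char.
- exact: leq_trans (card_irr_constt_add_irr chi th) _.
- exact: fixdim_drops_add_irr Nchi (proper_sub pHM) sMG drops_chi Mj drops_j.
Qed.

End BottomBooleanChain.

Theorem corollary6p11 (gT : finGroupType) (G : {group gT})
    (l : nat) (Hs : nat -> {group gT}) :
  (Hs 0%N : {set gT}) = 1%g ->
  (Hs l : {set gT}) = G ->
  (forall i, (i < l)%N ->
     ((Hs i : {set gT}) \proper Hs i.+1)%g /\ bottom_boolean (Hs i) (Hs i.+1)) ->
  exists chi : 'CF(G),
    [/\ chi \is a character, cfaithful chi & (#|irr_constt chi| <= l)%N].
Proof.
move=> Hs_bot Hs_top Hs_step.
have [chi [Nchi card_chi]] := exists_char_fixdim_drops Hs_top Hs_step (leqnn l).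
rewrite subnn => drops_chi; exists chi; split=> //.
apply: fixdim_drops1_cfaithful.
by have -> : 1%G = Hs 0%N by apply: val_inj.
Qed.
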